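(* Let $\boldsymbol\lambda=\{\lambda_i\}_{i\in\mathbb N}$ be a nondecreasing real sequence, let $E$ be a symmetric operator on a dense domain $\mathcal D$ of a Hilbert space $\mathcal H$, and let $\{f_i\}_{i\in\mathbb N}\subset\mathcal D$ be an orthonormal sequence with $\langle Ef_i,f_i\rangle=\lambda_i$ for all $i$. Let $\mathbf d=\{d_i\}_{i\in\mathbb N}$ be a real sequence such that \[ \lambda_1\le d_n<\lambda_n\quad\text{for all }n\ge2,\qquad\text{and}\qquad d_1=\lambda_1+\sum_{i=2}^\infty(\lambda_i-d_i)<\lambda_2 . \] Then there exists an orthonormal sequence $\{e_i\}_{i\in\mathbb N}$, each element of which lies in the (algebraic) linear span of $\{f_i\}_{i\in\mathbb N}$, such that $\overline{\operatorname{span}}\{e_i\}=\overline{\operatorname{span}}\{f_i\}$ and $\langle Ee_i,e_i\rangle=d_i$ for all $i\in\mathbb N$.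
   Context: $E$ symmetric means $\langle Ef,g\rangle=\langle f,Eg\rangle$ for all $f,g\in\mathcal D$. The series $\sum_{i\ge2}(\lambda_i-d_i)$ of positive terms is implicitly assumed convergent, since it equals $d_1-\lambda_1$. $\overline{\operatorname{span}}$ is the closed linear span. *)

From HB Require Import structures.
From mathcomp Require Import all_boot all_order all_algebra.
From mathcomp Require Import all_classical all_reals topology normedtype sequences.
From mathcomp Require Import complex.
Set Implicit Arguments. Unset Strict Implicit. Unset Printing Implicit Defensive.
Import Order.TTheory GRing.Theory Num.Theory.
Local Open Scope ring_scope.

(* Complex Hilbert spaces, set up by hand: scalars are R[i] for R : realType.
   Natural-number indices of the paper (starting at 1) are shifted to start at 0. *)
Section Hilbert.
Variable R : realType.
Local Notation C := R[i].
Variable V : lmodType C.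

Definition is_inner_product (ip : V -> V -> C) : Prop :=
  [/\ (forall (a : C) (x y z : V), ip (a *: x + y) z = a * ip x z + ip y z),
      (forall x y : V, ip y x = (ip x y)^*),
      (forall x : V, 0 <= ip x x) &
      (forall x : V, ip x x = 0 -> x = 0)].

Definition hnorm (ip : V -> V -> C) (x : V) : C := sqrtC (ip x x).

Definition hcomplete (ip : V -> V -> C) : Prop :=
  forall u : nat -> V,
    (forall eps : R, 0 < eps -> exists N, forall m n, (N <= m)%N -> (N <= n)%N ->
        hnorm ip (u m - u n) < (eps%:C)%C) ->
    exists x, forall eps : R, 0 < eps -> exists N, forall n, (N <= n)%N ->
        hnorm ip (u n - x) < (eps%:C)%C.

Definition is_hilbert (ip : V -> V -> C) : Prop :=
  is_inner_product ip /\ hcomplete ip.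

Definition is_subspace (D : set V) : Prop :=
  D 0 /\ forall (a : C) x y, D x -> D y -> D (a *: x + y).

Definition dense_in (ip : V -> V -> C) (D : set V) : Prop :=
  forall x (eps : R), 0 < eps -> exists y, D y /\ hnorm ip (x - y) < (eps%:C)%C.

Definition linear_on (D : set V) (E : V -> V) : Prop :=
  forall (a : C) x y, D x -> D y -> E (a *: x + y) = a *: E x + E y.

Definition symmetric_on (ip : V -> V -> C) (D : set V) (E : V -> V) : Prop :=
  forall f g, D f -> D g -> ip (E f) g = ip f (E g).

Definition orthonormal_seq (ip : V -> V -> C) (f : nat -> V) : Prop :=
  forall i j, ip (f i) (f j) = if i == j then 1 else 0.

Definition in_span (f : nat -> V) (x : V) : Prop :=
  exists (n : nat) (c : nat -> C), x = \sum_(i < n) c i *: f i.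

Definition in_cspan (ip : V -> V -> C) (f : nat -> V) (x : V) : Prop :=
  forall eps : R, 0 < eps -> exists y, in_span f y /\ hnorm ip (x - y) < (eps%:C)%C.

End Hilbert.

From mathcomp Require Import all_boot all_order all_algebra.
From mathcomp Require Import all_classical all_reals topology normedtype sequences.
From mathcomp Require Import complex.
From mathcomp Require Import ring lra.
Import Order.TTheory GRing.Theory Num.Theory numFieldNormedType.Exports.
Local Open Scope ring_scope.
Local Open Scope classical_set_scope.
Set Implicit Arguments. Unset Strict Implicit.

(* Starting from g_0 = f_0, step n rotates, inside the plane spanned by the unit
   vector g_n and f_(n+1), into a new orthonormal pair e_n, g_(n+1).  Writing
   t_n = sum_(i > n) (lam_i - d_i) and beta_n = d_n - t_n, one has
   <E g_n, g_n> = beta_n <= d_n < lam_(n+1) = <E f_(n+1), f_(n+1)>, so a rotation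
   whose cross terms are killed by a phase gives <E e_n, e_n> = d_n and
   <E g_(n+1), g_(n+1)> = beta_n + lam_(n+1) - d_n = beta_(n+1).
   Each f_k lies in the span of e_0, ..., e_(n-1), g_n, and the squared modulus of
   its g_n-coefficient is at most t_(n-1) / t_(k-1), which tends to 0: so the f_k
   lie in the closed span of the e_n, and the two closed spans coincide. *)

Local Notation "x %:C" := (x%:C)%C : ring_scope.

Section Span.
Variables (R : realType) (V : lmodType R[i]).
Implicit Types (f : nat -> V) (x y : V).

Definition in_span_lt f n x := exists b : nat -> R[i], x = \sum_(i < n) b i *: f i.

Lemma in_span_lt0 f n : in_span_lt f n 0.
Proof. by exists (fun=> 0); rewrite big1 // => i _; rewrite scale0r. Qed.

Lemma in_span_lt_lin f n a x y :
  in_span_lt f n x -> in_span_lt f n y -> in_span_lt f n (x + a *: y).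
Proof.
move=> [b ->] [c ->]; exists (fun i => b i + a * c i).
rewrite scaler_sumr -big_split /=.
by apply: eq_bigr => i _; rewrite scalerDl scalerA.
Qed.

Lemma in_span_ltZ f n a x : in_span_lt f n x -> in_span_lt f n (a *: x).
Proof. by rewrite -[a *: x]add0r; apply: in_span_lt_lin (in_span_lt0 _ _). Qed.

Lemma in_span_lt_widen f m n x : (m <= n)%N -> in_span_lt f m x -> in_span_lt f n x.
Proof.
move=> mn [b ->]; exists (fun i => if (i < m)%N then b i else 0).
rewrite (big_ord_widen n (fun i => b i *: f i)) // big_mkcond /=.
by apply: eq_bigr => i _; case: ifP; rewrite ?scale0r.
Qed.

Lemma in_span_ltS f n a x :
  in_span_lt f n x -> in_span_lt f n.+1 (x + a *: f n).
Proof.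
move=> [b ->]; exists (fun i => if i == n :> nat then a else b i).
by rewrite big_ord_recr /= eqxx; congr (_ + _); apply: eq_bigr => i _; rewrite ltn_eqF.
Qed.

Lemma in_span_lin f a x y : in_span f x -> in_span f y -> in_span f (x + a *: y).
Proof.
move=> [m hx] [n hy]; exists (maxn m n).
by apply: in_span_lt_lin; [apply: in_span_lt_widen hx | apply: in_span_lt_widen hy];
  rewrite ?leq_maxl ?leq_maxr.
Qed.

End Span.

Section InnerProduct.
Variables (R : realType) (V : lmodType R[i]) (ip : V -> V -> R[i]).
Hypothesis hip : is_inner_product ip.

Lemma ip_conj x y : ip y x = (ip x y)^*.
Proof. by case: hip. Qed.

Lemma ip_ge0 x : 0 <= ip x x.
Proof. by case: hip. Qed.

Lemma ip_eq0 x : ip x x = 0 -> x = 0.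
Proof. by case: hip => _ _ _; apply. Qed.

Lemma ipDl x y z : ip (x + y) z = ip x z + ip y z.
Proof. by case: hip => hl _ _ _; rewrite -[x]scale1r hl mul1r scale1r. Qed.

Lemma ip0l z : ip 0 z = 0.
Proof. by apply: (addrI (ip 0 z)); rewrite -ipDl !addr0. Qed.

Lemma ipZl a x z : ip (a *: x) z = a * ip x z.
Proof. by case: hip => hl _ _ _; rewrite -[a *: x]addr0 hl ip0l addr0. Qed.

Lemma ipDr x y z : ip z (x + y) = ip z x + ip z y.
Proof. by rewrite ip_conj ipDl rmorphD /= -!ip_conj. Qed.

Lemma ipZr a x z : ip z (a *: x) = a^* * ip z x.
Proof. by rewrite ip_conj ipZl rmorphM /= -ip_conj. Qed.

Lemma ip0r z : ip z 0 = 0.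
Proof. by rewrite ip_conj ip0l conjC0. Qed.

Lemma ip_comb2 a b a' b' x y x' y' :
  ip (a *: x + b *: y) (a' *: x' + b' *: y') =
  a * a'^* * ip x x' + a * b'^* * ip x y' + b * a'^* * ip y x' + b * b'^* * ip y y'.
Proof. by rewrite !(ipDl, ipDr, ipZl, ipZr); ring. Qed.

Lemma ip_sumr n (c : nat -> R[i]) (f : nat -> V) z :
  ip z (\sum_(i < n) c i *: f i) = \sum_(i < n) (c i)^* * ip z (f i).
Proof.
elim: n => [|n IH]; first by rewrite !big_ord0 ip0r.
by rewrite !big_ord_recr /= ipDr IH ipZr.
Qed.

Lemma ip_span_lt_orth (f : nat -> V) k m x :
  orthonormal_seq ip f -> (k <= m)%N -> in_span_lt f k x -> ip x (f m) = 0.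
Proof.
move=> onf km [b ->]; rewrite ip_conj ip_sumr big1 ?conjC0 // => i _.
by rewrite onf gtn_eqF ?mulr0 // (leq_trans (ltn_ord i)).
Qed.

Lemma cauchy_schwarz x y : ip x y * (ip x y)^* <= ip x x * ip y y.
Proof.
have [->|y0] := eqVneq y 0; first by rewrite !ip0r conjC0 !mulr0.
set Q := ip y y; set q := ip x y.
have Q0 : 0 < Q by rewrite lt_def ip_ge0 andbT; apply: contra y0 => /eqP/ip_eq0 ->.
have QJ : Q^* = Q by rewrite geC0_conj // ltW.
have := ip_ge0 (Q *: x + (- q) *: y).
rewrite ip_comb2 -/Q -/q (ip_conj x y) -/q QJ rmorphN.
have -> : Q * Q * ip x x + Q * - q^* * q + - q * Q * q^* + - q * - q^* * Q =
          Q * (ip x x * Q - q * q^*) by ring.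
by rewrite pmulr_rge0 // subr_ge0.
Qed.

Lemma hnorm_ge0 x : 0 <= hnorm ip x.
Proof. by rewrite sqrtC_ge0 ip_ge0. Qed.

Lemma hnorm0 : hnorm ip 0 = 0.
Proof. by rewrite /hnorm ip0l sqrtC0. Qed.

Lemma hnorm_scale a x : hnorm ip (a *: x) = `|a| * hnorm ip x.
Proof.
rewrite /hnorm ipZl ipZr mulrA [a * _]mulrC -normCKC.
by rewrite sqrtCM ?nnegrE ?exprn_ge0 ?ip_ge0 // sqrCK.
Qed.

Lemma hnorm_triangle x y : hnorm ip (x + y) <= hnorm ip x + hnorm ip y.
Proof.
have nx := hnorm_ge0 x; have ny := hnorm_ge0 y.
rewrite /hnorm -[X in _ <= X]sqrCK ?addr_ge0 //.
rewrite ler_sqrtC ?nnegrE ?ip_ge0 ?exprn_ge0 ?addr_ge0 //.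
rewrite ipDl !ipDr (ip_conj x y) sqrrD !sqrtCK; set q := ip x y.
have cross : q + q^* <= 2 * (sqrtC (ip x x) * sqrtC (ip y y)).
  have -> : q + q^* = 2 * 'Re q by rewrite ReE mulrC divfK ?pnatr_eq0.
  rewrite ler_pM2l ?ltr0n // -sqrtCM ?nnegrE ?ip_ge0 //.
  apply: (le_trans (real_ler_norm (Creal_Re q))).
  apply: (le_trans (leif_normC_Re_Creal q).1).
  rewrite normC_def ler_sqrtC ?nnegrE ?mul_conjC_ge0 ?mulr_ge0 ?ip_ge0 //.
  exact: cauchy_schwarz.
have -> : ip x x + q + (q^* + ip y y) = ip x x + (q + q^*) + ip y y by ring.
by rewrite lerD2r lerD2l -mulr_natl.
Qed.

End InnerProduct.

Section ClosedSpan.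
Variables (R : realType) (V : lmodType R[i]) (ip : V -> V -> R[i]).
Hypothesis hip : is_inner_product ip.
Implicit Types (f g : nat -> V) (x y : V).

Lemma in_cspanP f x : in_cspan ip f x <->
  forall eps : R[i], 0 < eps -> exists y, in_span f y /\ hnorm ip (x - y) < eps.
Proof.
split => [hx eps eps0 | hx eps eps0]; last by apply: hx; rewrite ltcR.
have epsR : (complex.Re eps)%:C = eps by apply: RRe_real; exact: gtr0_real.
by rewrite -epsR; apply: hx; rewrite -ltcR epsR.
Qed.

Lemma in_span_cspan f x : in_span f x -> in_cspan ip f x.
Proof. by move=> fx eps eps0; exists x; rewrite subrr hnorm0 // ltcR. Qed.

Lemma in_cspan_lin f a x y :
  in_cspan ip f x -> in_cspan ip f y -> in_cspan ip f (x + a *: y).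
Proof.
move=> /in_cspanP hx /in_cspanP hy; apply/in_cspanP => eps eps0.
have a1 : 0 < `|a| + 1 by rewrite ltr_wpDl.
have eps2 : 0 < eps / 2 by rewrite divr_gt0.
have [x' [fx' xx']] := hx _ eps2.
have [y' [fy' yy']] := hy (eps / 2 / (`|a| + 1)) (divr_gt0 eps2 a1).
exists (x' + a *: y'); split; first exact: in_span_lin.
have -> : x + a *: y - (x' + a *: y') = (x - x') + a *: (y - y').
  by rewrite scalerBr opprD addrACA.
apply: (le_lt_trans (hnorm_triangle hip _ _)); rewrite (splitr eps) hnorm_scale //.
rewrite ltr_leD //; apply: le_trans (ler_wpM2l (normr_ge0 a) (ltW yy')) _.
by rewrite mulrA ler_pdivrMr // [_ * (eps / 2)]mulrC ler_pM2l // lerDl.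
Qed.

Lemma in_cspan_span f g y :
  (forall i, in_cspan ip f (g i)) -> in_span g y -> in_cspan ip f y.
Proof.
move=> fg [n [c ->]]; elim: n => [|n IH].
  by rewrite big_ord0; apply: in_span_cspan; exists 0%N; apply: in_span_lt0.
by rewrite big_ord_recr; apply: in_cspan_lin.
Qed.

Lemma in_cspan_trans f g x :
  (forall i, in_cspan ip f (g i)) -> in_cspan ip g x -> in_cspan ip f x.
Proof.
move=> fg /in_cspanP gx; apply/in_cspanP => eps eps0.
have eps2 : 0 < eps / 2 by rewrite divr_gt0.
have [y [gy xy]] := gx _ eps2.
have [z [fz yz]] := (in_cspanP _ _).1 (in_cspan_span fg gy) _ eps2.
exists z; split => //; rewrite (splitr eps) -(subrKA y).
exact: le_lt_trans (hnorm_triangle hip _ _) (ltrD xy yz).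
Qed.

End ClosedSpan.

Section Operator.
Variables (R : realType) (V : lmodType R[i]) (D : set V) (E : V -> V).
Hypotheses (hD : is_subspace D) (hE : linear_on D E).

Lemma subspaceZ a x : D x -> D (a *: x).
Proof. by case: hD => D0 hlin Dx; rewrite -[_ *: x]addr0; apply: hlin. Qed.

Lemma subspace_comb2 a b x y : D x -> D y -> D (a *: x + b *: y).
Proof. by case: hD => _ hlin Dx Dy; apply: hlin => //; apply: subspaceZ. Qed.

Lemma linear_on0 : E 0 = 0.
Proof.
case: hD => D0 _; have := hE 1 D0 D0; rewrite !scale1r addr0 => E00.
by apply: (addrI (E 0)); rewrite addr0 -E00.
Qed.

Lemma linear_on_comb2 a b x y : D x -> D y -> E (a *: x + b *: y) = a *: E x + b *: E y.
Proof.
have [D0 _] := hD; move=> Dx Dy.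
rewrite (hE _ Dx (subspaceZ b Dy)) -[b *: y]addr0 (hE _ Dy D0).
by rewrite linear_on0 !addr0.
Qed.

End Operator.

Section Phase.
Variable R : realType.
Implicit Types z : R[i].

Definition phase z : R[i] := if z == 0 then 1 else 'i * z^* / `|z|.

Lemma phase_unit z : phase z * (phase z)^* = 1.
Proof.
rewrite /phase; case: eqP => [_|/eqP z0]; first by rewrite rmorph1 mulr1.
have nz : `|z| != 0 by rewrite normr_eq0.
rewrite !rmorphM /= fmorphV /= conj_normC conjCi conjCK.
transitivity (- ('i ^+ 2) * (z * z^*) / `|z| ^+ 2); first by field.
by rewrite sqrCi opprK mul1r -normCK divff // expf_neq0.
Qed.

Lemma phase_imaginary z : phase z * z + (phase z * z)^* = 0.
Proof.
rewrite /phase; case: eqP => [->|/eqP z0]; first by rewrite mulr0 rmorph0 addr0.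
have nz : `|z| != 0 by rewrite normr_eq0.
have -> : 'i * z^* / `|z| * z = 'i * `|z|.
  transitivity ('i * (z^* * z) / `|z|); first by field.
  by rewrite -normCKC expr2 mulrA mulfK.
by rewrite rmorphM /= conj_normC conjCi mulNr subrr.
Qed.

Lemma norm_phase z : `|phase z| = 1.
Proof. by apply/eqP; rewrite -sqrp_eq1 // normCK phase_unit. Qed.

End Phase.

Lemma conjC_real (R : realType) (r : R) : (r%:C)^* = r%:C :> R[i].
Proof. by rewrite conj_Creal //; apply/complex_realP; exists r. Qed.

Section Rotation.
Variables (R : realType) (V : lmodType R[i]) (ip : V -> V -> R[i]) (D : set V) (E : V -> V).
Variables (u v : V) (a l d : R).

Definition rot_cos : R := Num.sqrt ((l - d) / (l - a)).
Definition rot_sin : R := Num.sqrt ((d - a) / (l - a)).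

Definition rotate (x y : R) : V := x%:C *: u + (y%:C * phase (ip (E v) u)) *: v.

Definition rot_e : V := rotate rot_cos rot_sin.
Definition rot_g : V := rotate (- rot_sin) rot_cos.

Local Notation w := (phase (ip (E v) u)).

Lemma rotate_comb (al be : R[i]) x y x' y' :
  al *: rotate x y + be *: rotate x' y' =
  (al * x%:C + be * x'%:C) *: u + ((al * y%:C + be * y'%:C) * w) *: v.
Proof. by rewrite !scalerDr !scalerA addrACA -!scalerDl !mulrA -mulrDl. Qed.

Hypotheses (ad : a <= d) (dl : d < l).

Lemma rot_cos2 : rot_cos ^+ 2 = (l - d) / (l - a).
Proof. by rewrite sqr_sqrtr // divr_ge0 // subr_ge0 ltW // (le_lt_trans ad). Qed.

Lemma rot_sin2 : rot_sin ^+ 2 = (d - a) / (l - a).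
Proof. by rewrite sqr_sqrtr // divr_ge0 // subr_ge0 // ltW // (le_lt_trans ad). Qed.

Lemma rot_cos2_sin2 : rot_cos ^+ 2 + rot_sin ^+ 2 = 1.
Proof.
have la : l - a != 0 by rewrite subr_eq0 gt_eqF // (le_lt_trans ad).
by rewrite rot_cos2 rot_sin2 -mulrDl addrA subrK divff.
Qed.

Lemma rot_decomp_u : u = rot_cos%:C *: rot_e + (- rot_sin)%:C *: rot_g.
Proof.
rewrite rotate_comb -!rmorphM -!rmorphD /= -!expr2 sqrrN rot_cos2_sin2.
by rewrite mulNr [rot_sin * _]mulrC subrr rmorph0 mul0r scale0r addr0 rmorph1 scale1r.
Qed.

Lemma rot_decomp_v :
  v = (w^* * rot_sin%:C) *: rot_e + (w^* * rot_cos%:C) *: rot_g.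
Proof.
rewrite rotate_comb -!mulrA -!mulrDr -!rmorphM -!rmorphD /= mulrN [rot_cos * _]mulrC.
rewrite subrr rmorph0 mulr0 scale0r add0r -!expr2 addrC rot_cos2_sin2 rmorph1 mulr1.
by rewrite mulrC phase_unit scale1r.
Qed.

Hypotheses (hip : is_inner_product ip) (hD : is_subspace D).
Hypotheses (hE : linear_on D E) (hS : symmetric_on ip D E).
Hypotheses (Du : D u) (Dv : D v) (uu : ip u u = 1) (vv : ip v v = 1) (uv : ip u v = 0).
Hypotheses (Eu : ip (E u) u = a%:C) (Ev : ip (E v) v = l%:C).

Lemma ip_rotate_orth z x y : ip z u = 0 -> ip z v = 0 -> ip z (rotate x y) = 0.
Proof. by move=> zu zv; rewrite (ipDr hip) !(ipZr hip) zu zv !mulr0 addr0. Qed.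

Lemma rotate_in_D x y : D (rotate x y).
Proof. exact: subspace_comb2. Qed.

Lemma ip_rotate x y x' y' : ip (rotate x y) (rotate x' y') = (x * x' + y * y')%:C.
Proof.
rewrite ip_comb2 // uu vv uv (ip_conj hip u v) uv conjC0 !rmorphM /= !conjC_real.
transitivity (x%:C * x'%:C + y%:C * y'%:C * (w * w^*)); first by ring.
by rewrite phase_unit mulr1 rmorphD !rmorphM.
Qed.

Lemma quad_rotate x y : ip (E (rotate x y)) (rotate x y) = (x ^+ 2 * a + y ^+ 2 * l)%:C.
Proof.
rewrite (linear_on_comb2 hD hE) // ip_comb2 // Eu Ev (hS Du Dv) (ip_conj hip (E v) u).
rewrite !rmorphM /= !conjC_real.
set z := ip (E v) u.
transitivity ((x%:C) ^+ 2 * a%:C + (y%:C) ^+ 2 * l%:C * (w * w^*)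
  + x%:C * y%:C * (w * z + (w * z)^*)); first by rewrite rmorphM /=; ring.
by rewrite phase_unit phase_imaginary mulr0 addr0 mulr1 -!rmorphXn -!rmorphM -rmorphD.
Qed.

Lemma ip_rot_e : ip rot_e rot_e = 1.
Proof. by rewrite ip_rotate -!expr2 rot_cos2_sin2. Qed.

Lemma ip_rot_g : ip rot_g rot_g = 1.
Proof. by rewrite ip_rotate mulrNN -!expr2 addrC rot_cos2_sin2. Qed.

Lemma ip_rot_e_g : ip rot_e rot_g = 0.
Proof. by rewrite ip_rotate mulrN mulrC addNr rmorph0. Qed.

Lemma quad_rot_e : ip (E rot_e) rot_e = d%:C.
Proof.
have la : l - a != 0 by rewrite subr_eq0 gt_eqF // (le_lt_trans ad).
by rewrite quad_rotate rot_cos2 rot_sin2; congr (_%:C); field.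
Qed.

Lemma quad_rot_g : ip (E rot_g) rot_g = (a + l - d)%:C.
Proof.
have la : l - a != 0 by rewrite subr_eq0 gt_eqF // (le_lt_trans ad).
by rewrite quad_rotate sqrrN rot_cos2 rot_sin2; congr (_%:C); field.
Qed.

End Rotation.

Section Tail.
Variables (R : realType) (lam d : nat -> R).

Definition tail n : R := (d 0%N - lam 0%N) - \sum_(1 <= i < n.+1) (lam i - d i).

Definition beta n : R := d n - tail n.

Lemma tail_succ n : tail n.+1 = tail n - (lam n.+1 - d n.+1).
Proof. by rewrite /tail big_nat_recr //= opprD addrA. Qed.

Lemma beta0 : beta 0 = lam 0%N.
Proof. by rewrite /beta /tail big_geq // subr0 opprB addrC subrK. Qed.

Lemma beta_succ n : beta n.+1 = beta n + lam n.+1 - d n.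
Proof. by rewrite /beta tail_succ; ring. Qed.

Hypothesis hd : forall n, (1 <= n)%N -> lam 0%N <= d n < lam n.
Hypothesis hc :
  ([sequence \sum_(1 <= i < n.+1) (lam i - d i)]_n : R^nat) @ \oo --> (d 0%N - lam 0%N : R).

Lemma tail_cvg0 : tail @ \oo --> 0.
Proof.
by rewrite -(subrr (d 0%N - lam 0%N)); apply: cvgB => //; apply: cvg_cst.
Qed.

Lemma tail_gap n : 0 < lam n.+1 - d n.+1.
Proof. by have /andP[_] := hd (ltn0Sn n); rewrite subr_gt0. Qed.

Lemma tail_gt0 n : 0 < tail n.
Proof.
have tail_dec : {homo tail : m n / (m <= n)%N >-> n <= m}.
  by apply/nonincreasing_seqP => m; rewrite tail_succ gerBl ltW // tail_gap.
have tail_ge0 m : 0 <= tail m.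
  rewrite -(cvg_lim _ tail_cvg0) //.
  by apply: nonincreasing_cvgn_ge => //; apply: cvgP tail_cvg0.
by rewrite -[tail n](subrK (lam n.+1 - d n.+1)) -tail_succ ltr_wpDl ?tail_gap.
Qed.

Lemma beta_le_d n : beta n <= d n.
Proof. by rewrite /beta gerBl ltW ?tail_gt0. Qed.

Hypothesis hmono : {homo lam : m n / (m <= n)%N >-> m <= n}.
Hypothesis hd0 : d 0%N < lam 1%N.

Lemma d_lt_lam_succ n : d n < lam n.+1.
Proof.
case: n => // n; have /andP[_ dn] := hd (ltn0Sn n).
exact: lt_le_trans dn (hmono (leqnSn _)).
Qed.

Lemma tail_pred_le n : tail n.-1 <= lam n.+1 - beta n.
Proof.
rewrite /beta; case: n => [|n] /=; first by have := hd0; lra.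
by rewrite tail_succ; have := hmono (leqnSn n.+1); lra.
Qed.

End Tail.

Section Construction.
Variables (R : realType) (V : lmodType R[i]) (ip : V -> V -> R[i]) (D : set V) (E : V -> V).
Variables (lam d : nat -> R) (f : nat -> V).

Fixpoint gseq n : V :=
  if n is m.+1 then rot_g ip E (gseq m) (f m.+1) (beta lam d m) (lam m.+1) (d m) else f 0%N.

Definition eseq n : V := rot_e ip E (gseq n) (f n.+1) (beta lam d n) (lam n.+1) (d n).

Lemma rotate_span n u x y : in_span_lt f n u -> in_span_lt f n.+1 (rotate ip E u (f n) x y).
Proof. by move=> fu; apply/in_span_ltS/in_span_ltZ. Qed.

Lemma gseq_span n : in_span_lt f n.+1 (gseq n).
Proof.
elim: n => [|n IH]; last exact: rotate_span.
by exists (fun=> 1); rewrite big_ord1 scale1r.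
Qed.

Lemma eseq_span n : in_span_lt f n.+2 (eseq n).
Proof. exact/rotate_span/gseq_span. Qed.

Hypotheses (hip : is_inner_product ip) (hD : is_subspace D).
Hypotheses (hE : linear_on D E) (hS : symmetric_on ip D E).
Hypotheses (hfD : forall i, D (f i)) (hon : orthonormal_seq ip f).
Hypothesis hval : forall i, ip (E (f i)) (f i) = (lam i)%:C.
Hypothesis hmono : {homo lam : m n / (m <= n)%N >-> m <= n}.
Hypothesis hd : forall n, (1 <= n)%N -> lam 0%N <= d n < lam n.
Hypothesis hc :
  ([sequence \sum_(1 <= i < n.+1) (lam i - d i)]_n : R^nat) @ \oo --> (d 0%N - lam 0%N : R).
Hypothesis hd0 : d 0%N < lam 1%N.

Lemma f_unit n : ip (f n) (f n) = 1.
Proof. by rewrite hon eqxx. Qed.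

Lemma gseq_orth_f n : ip (gseq n) (f n.+1) = 0.
Proof. exact: ip_span_lt_orth (gseq_span n). Qed.

Lemma gseq_facts n :
  [/\ D (gseq n), ip (gseq n) (gseq n) = 1 & ip (E (gseq n)) (gseq n) = (beta lam d n)%:C].
Proof.
elim: n => [|n [Dg gg Eg]]; first by rewrite /= f_unit hval beta0.
have ad := beta_le_d hd hc n; have dl := d_lt_lam_succ hd hmono hd0 n.
have := f_unit n.+1; have := gseq_orth_f n; have := hfD n.+1; have := hval n.+1.
move=> Ef Df gf ff; split; first by rewrite /= /rot_g; apply: rotate_in_D.
  by rewrite /=; apply: ip_rot_g.
by rewrite /= (quad_rot_g (D := D)) // beta_succ.
Qed.

Lemma eseq_facts n : [/\ ip (eseq n) (eseq n) = 1,
  ip (E (eseq n)) (eseq n) = (d n)%:C & ip (eseq n) (gseq n.+1) = 0].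
Proof.
have [Dg gg Eg] := gseq_facts n.
have ad := beta_le_d hd hc n; have dl := d_lt_lam_succ hd hmono hd0 n.
have := f_unit n.+1; have := gseq_orth_f n; have := hfD n.+1; have := hval n.+1.
move=> Ef Df gf ff; rewrite /eseq /=.
by split; [apply: ip_rot_e | apply: (quad_rot_e (D := D)) | apply: ip_rot_e_g].
Qed.

Lemma eseq_gseq_orth j n : (j < n)%N -> ip (eseq j) (gseq n) = 0.
Proof.
elim: n => // n IH; rewrite ltnS leq_eqVlt => /orP[/eqP-> | jn].
  by case: (eseq_facts n).
rewrite /= /rot_g; apply: ip_rotate_orth => //; first exact: IH.
exact: ip_span_lt_orth (eseq_span j).
Qed.

Lemma eseq_orthonormal : orthonormal_seq ip eseq.
Proof.
have lt_orth i j : (i < j)%N -> ip (eseq i) (eseq j) = 0.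
  move=> ij; rewrite [eseq j]/eseq /rot_e; apply: ip_rotate_orth => //.
    exact: eseq_gseq_orth.
  exact: ip_span_lt_orth (eseq_span i).
move=> i j; case: ltngtP => [ij | ji | ->]; first exact: lt_orth.
  by rewrite ip_conj // lt_orth ?conjC0.
by case: (eseq_facts j).
Qed.

Lemma sin2_tail n :
  rot_sin (beta lam d n) (lam n.+1) (d n) ^+ 2 * tail lam d n.-1 <= tail lam d n.
Proof.
have ad := beta_le_d hd hc n; have dl := d_lt_lam_succ hd hmono hd0 n.
have lb : 0 < lam n.+1 - beta lam d n by rewrite subr_gt0 (le_lt_trans ad).
have db : d n - beta lam d n = tail lam d n by rewrite /beta opprB addrC subrK.
rewrite rot_sin2 // db mulrAC ler_pdivrMr // ler_pM2l ?tail_gt0 //.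
exact: tail_pred_le.
Qed.

(* [k.-1] truncates: for k = 0 the weight on the left is t_0. *)
Lemma f_expansion k n : (k <= n)%N -> exists g : R[i],
  in_span_lt eseq n (f k - g *: gseq n) /\
  `|g| ^+ 2 * (tail lam d k.-1)%:C <= (tail lam d n.-1)%:C.
Proof.
elim: n => [|n IH].
  rewrite leqn0 => /eqP->; exists 1.
  by rewrite scale1r subrr normr1 expr1n mul1r; split; first exact: in_span_lt0.
have ad := beta_le_d hd hc n; have dl := d_lt_lam_succ hd hmono hd0 n.
set c := rot_cos (beta lam d n) (lam n.+1) (d n).
set s := rot_sin (beta lam d n) (lam n.+1) (d n).
have [c0 s0] : 0 <= c /\ 0 <= s by split; apply: sqrtr_ge0.
rewrite leq_eqVlt => /orP[/eqP-> | /IH[g [span_g le_g]]].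
  set w := phase (ip (E (f n.+1)) (gseq n)).
  have hv : f n.+1 = (w^* * s%:C) *: eseq n + (w^* * c%:C) *: gseq n.+1.
    exact: rot_decomp_v.
  exists (w^* * c%:C); split.
    by rewrite {1}hv addrK -[X in in_span_lt _ _ X]add0r; apply/in_span_ltS/in_span_lt0.
  rewrite normrM norm_conjC norm_phase mul1r ger0_norm ?ler0c // -rmorphXn -rmorphM lecR.
  apply: ler_piMl; first exact/ltW/(tail_gt0 hd hc).
  by rewrite -(rot_cos2_sin2 ad dl) lerDl sqr_ge0.
have hu : gseq n = c%:C *: eseq n + (- s)%:C *: gseq n.+1 by exact: rot_decomp_u.
exists (g * (- s)%:C); split.
  move: span_g; rewrite hu; move: (gseq n.+1) => G.
  rewrite scalerDr !scalerA opprD addrA => /(in_span_ltS (g * c%:C)).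
  by rewrite addrAC subrK.
rewrite normrM rmorphN /= normrN (@ger0_norm _ s%:C) ?ler0c // exprMn mulrAC.
apply: le_trans (ler_wpM2r _ le_g) _; first by rewrite exprn_ge0 ?ler0c.
by rewrite -rmorphXn -rmorphM lecR mulrC sin2_tail.
Qed.

Lemma f_in_cspan_eseq k : in_cspan ip eseq (f k).
Proof.
move=> eps eps0; have tk := tail_gt0 hd hc k.-1.
have epsk : 0 < eps ^+ 2 * tail lam d k.-1 by rewrite mulr_gt0 ?exprn_gt0.
move/cvgrPdist_lt: (tail_cvg0 hc) => /(_ _ epsk)[N _ hN].
have [g [span_g le_g]] := f_expansion (leq_maxl k N.+1).
exists (f k - g *: gseq (maxn k N.+1)); split; first by exists (maxn k N.+1).
have [_ gg _] := gseq_facts (maxn k N.+1).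
rewrite opprB addrC subrK hnorm_scale // /hnorm gg sqrtC1 mulr1.
rewrite -(ltr_pXn2r (ltn0Sn 1)) ?nnegrE ?normr_ge0 ?ler0c ?(ltW eps0) //.
rewrite -(ltr_pM2r (_ : 0 < (tail lam d k.-1)%:C)) ?ltcR //.
apply: le_lt_trans le_g _; rewrite -rmorphXn -rmorphM ltcR.
have /hN : (N <= (maxn k N.+1).-1)%N.
  by rewrite -ltnS prednK ?leq_maxr // (leq_trans _ (leq_maxr _ _)).
by rewrite sub0r normrN ger0_norm // ltW ?tail_gt0.
Qed.

End Construction.

Unset Implicit Arguments.

Theorem lemma3p3 (R : realType) (V : lmodType R[i]) (ip : V -> V -> R[i])
  (D : set V) (E : V -> V) (lam d : nat -> R) (f : nat -> V) :
  is_hilbert ip ->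
  is_subspace D -> dense_in ip D ->
  linear_on D E -> symmetric_on ip D E ->
  {homo lam : m n / (m <= n)%N >-> m <= n} ->
  (forall i, D (f i)) -> orthonormal_seq ip f ->
  (forall i, ip (E (f i)) (f i) = ((lam i)%:C)%C) ->
  (forall n, (1 <= n)%N -> lam 0%N <= d n < lam n) ->
  ([sequence \sum_(1 <= i < n.+1) (lam i - d i)]_n : R^nat) @ \oo --> (d 0%N - lam 0%N : R) ->
  d 0%N < lam 1%N ->
  exists e : nat -> V,
    [/\ orthonormal_seq ip e,
        (forall i, in_span f (e i)),
        (forall x, in_cspan ip e x <-> in_cspan ip f x) &
        (forall i, ip (E (e i)) (e i) = ((d i)%:C)%C)].
Proof.
move=> [hip _] hD _ hE hS hmono hfD hon hval hd hc hd0.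
have e_span i : in_span f (eseq ip E lam d f i) by exists i.+2; apply: eseq_span.
exists (eseq ip E lam d f); split => //.
- exact: (eseq_orthonormal hip hD hE hS hfD hon hval hmono hd hc hd0).
- move=> x; split; apply: in_cspan_trans => // i; first exact: in_span_cspan.
  exact: (f_in_cspan_eseq hip hD hE hS hfD hon hval hmono hd hc hd0).
- by move=> i; case: (eseq_facts hip hD hE hS hfD hon hval hmono hd hc hd0 i).
Qed.
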